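(* Let $H$ be an oriented graph on $h$ vertices. Consider any labeling of the vertices of $H$ by $1,\dots,h$ and let $G$ be the corresponding backedge graph. Then for every order-preserving homomorphism $f:G\to K(H)$ there is a set $X\subseteq V(H)$ such that $f|_X$ is a graph isomorphism onto $K(H)$.
   Context: Graphs are undirected with vertex sets that are subsets of $\mathbb{N}$; subgraphs inherit labels. Given a labeling of $V(H)$ by $1,\dots,h$, the backedge graph of $H$ is the undirected graph on $[h]$ with $\{i,j\}$ an edge iff $i<j$ and $j\to i$ in $H$. An order-preserving homomorphism from $G$ to $G'$ is a map $f:V(G)\to V(G')$ with $f(i)\le f(j)$ whenever $i\le j$ and mapping edges to edges; an order-preserving isomorphism is one that is also a graph isomorphism. The ordered core of $G$ is a subgraph of $G$ with the fewest vertices among subgraphs to which $G$ has an order-preserving homomorphism. Let $\mathcal{C}(H)$ be the set of ordered cores of the backedge graphs of $H$ over all $h!$ labelings of $V(H)$ by $1,\dots,h$. $K(H)$ denotes a fixed element of $\mathcal{C}(H)$ that is maximal in the sense that for every $C\in\mathcal{C}(H)$, if there is an order-preserving homomorphism from $C$ to $K(H)$ then there is an order-preserving isomorphism between $C$ and $K(H)$. *)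

From HB Require Import structures.
From mathcomp Require Import all_boot.
From mathcomp Require Import finmap.

Set Implicit Arguments.
Unset Strict Implicit.
Unset Printing Implicit Defensive.

Local Open Scope fset_scope.

(* A graph with vertex set a finite subset of nat; edges given by a relation
   (only its restriction to the vertex set is meaningful). *)
Record graph := Graph { gV : {fset nat}; gE : rel nat }.

Definition subgraph (C G : graph) : Prop :=
  [/\ gV C `<=` gV G,
      (forall i j, gE C i j -> [/\ i \in gV C, j \in gV C & gE G i j]) &
      (forall i j, gE C i j = gE C j i)].

(* f (a total map on nat, only its values on V(G) matter) is an
   order-preserving homomorphism from G to G'. *)
Definition op_hom (G G' : graph) (f : nat -> nat) : Prop :=
  [/\ (forall i, i \in gV G -> f i \in gV G'),
      (forall i j, i \in gV G -> j \in gV G -> i <= j -> f i <= f j) &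
      (forall i j, i \in gV G -> j \in gV G -> gE G i j -> gE G' (f i) (f j))].

Definition op_homomorphic (G G' : graph) : Prop := exists f, op_hom G G' f.

Definition op_iso (G G' : graph) (f : nat -> nat) : Prop :=
  [/\ op_hom G G' f,
      {in gV G &, injective f},
      (forall k, k \in gV G' -> exists2 i, i \in gV G & f i = k) &
      (forall i j, i \in gV G -> j \in gV G -> gE G' (f i) (f j) -> gE G i j)].

Definition op_isomorphic (G G' : graph) : Prop := exists f, op_iso G G' f.

Definition is_ordered_core (C G : graph) : Prop :=
  [/\ subgraph C G, op_homomorphic G C &
      forall S, subgraph S G -> op_homomorphic G S -> #|` gV C| <= #|` gV S|].

(* an oriented graph on a finite vertex type T, arcs given by a : x -> y *)
Definition oriented (T : finType) (a : rel T) : Prop :=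
  irreflexive a /\ (forall x y, a x y -> ~~ a y x).

Definition labeling (T : finType) (lab : T -> nat) : Prop :=
  injective lab /\ (forall x, 0 < lab x <= #|T|).

(* backedge graph: on [h], {i,j} edge iff i < j and j -> i in H *)
Definition backedge (T : finType) (a : rel T) (lab : T -> nat) : graph :=
  Graph [fset i | i in iota 1 #|T|]
    (fun i j => [exists x, exists y,
       (lab x == i) && (lab y == j) &&
       (((i < j) && a y x) || ((j < i) && a x y))]).

Definition in_cores (T : finType) (a : rel T) (C : graph) : Prop :=
  exists lab, labeling lab /\ is_ordered_core C (backedge a lab).

(* K is a maximal element of C(H) in the sense of K(H) *)
Definition maximal_core (T : finType) (a : rel T) (K : graph) : Prop :=
  in_cores a K /\
  (forall C, in_cores a C -> op_homomorphic C K -> op_isomorphic C K).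

From HB Require Import structures.
From mathcomp Require Import all_boot.
From mathcomp Require Import finmap.
From Stdlib Require Import Classical.

Set Implicit Arguments.
Unset Strict Implicit.
Unset Printing Implicit Defensive.

(* Let C be an ordered core of the backedge graph G.  Then C is in C(H) and f
   restricts to an order-preserving homomorphism C -> K(H), so maximality of
   K(H) yields an order-preserving isomorphism g : C -> K(H).  An ordered core
   is rigid: the image of an order-preserving endomorphism of C is a subgraph
   of G onto which G maps, so by minimality the endomorphism is a bijection of
   V(C), and a monotone bijection of a finite set of integers is the identity.
   Applied to g^-1 o f this gives f = g on V(C), so X = lab^-1(V(C)) works. *)

Local Open Scope fset_scope.

Definition induced (G : graph) (A : {fset nat}) : graph :=
  Graph A [rel u v | [&& gE G u v, u \in A & v \in A]].

Lemma subgraph_induced (C G : graph) (A : {fset nat}) :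
  subgraph C G -> A `<=` gV C -> subgraph (induced C A) G.
Proof.
move=> [sCG edgeCG symC] sAC; split => /=.
- exact: fsubset_trans sAC sCG.
- by move=> i j /and3P [e iA jA]; have [_ _] := edgeCG i j e.
- by move=> i j; rewrite symC [(i \in A) && _]andbC.
Qed.

Lemma op_hom_comp (G1 G2 G3 : graph) (f g : nat -> nat) :
  op_hom G1 G2 f -> op_hom G2 G3 g -> op_hom G1 G3 (g \o f).
Proof.
move=> [fV fle fE] [gV_ gle gE_]; split => [i iV | i j iV jV ij | i j iV jV e] /=.
- exact/gV_/fV.
- by apply: gle; rewrite ?fV //; apply: fle.
- by apply: gE_; rewrite ?fV //; apply: fE.
Qed.

Lemma op_hom_subgraph (C G K : graph) (f : nat -> nat) :
  subgraph C G -> op_hom G K f -> op_hom C K f.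
Proof.
move=> [/fsubsetP sCG edgeCG _] [fV fle fE]; split => [i iV | i j iV jV | i j iV jV e].
- exact/fV/sCG.
- by apply: fle; apply: sCG.
- by have [_ _] := edgeCG i j e; apply: fE; apply: sCG.
Qed.

Lemma op_hom_onto_image (G K : graph) (f : nat -> nat) :
  op_hom G K f -> op_hom G (induced K (f @` gV G)) f.
Proof.
move=> [_ fle fE]; split => [i iV | // | i j iV jV e] /=; first exact: in_imfset.
by rewrite fE ?in_imfset.
Qed.

Lemma nondecreasing_injective_fset_id (A : {fset nat}) (phi : nat -> nat) :
  {in A, forall i, phi i \in A} -> {in A &, {homo phi : i j / i <= j}} ->
  {in A &, injective phi} -> {in A, phi =1 id}.
Proof.
move=> phiA phile phiinj.
have imA : phi @` A = A.
  have /card_in_imfsetP/eqP card_im := phiinj.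
  apply/eqP; rewrite eqEfcard card_im leqnn andbT.
  by apply/fsubsetP => _ /imfsetP [i /= iA ->]; apply: phiA.
elim/ltn_ind => i IH iA /=.
case: (ltngtP (phi i) i) => // [lt_phi | gt_phi].
- have /phiinj fixi := IH _ lt_phi (phiA _ iA).
  by rewrite (fixi (phiA _ iA) iA) ltnn in lt_phi.
- have /imfsetP [j /= jA eij] : i \in phi @` A by rewrite imA.
  case: (ltnP j i) => [lt_ji | le_ij].
    have /= fixj := IH _ lt_ji jA.
    by rewrite -eij in fixj; rewrite fixj ltnn in lt_ji.
  by have := phile _ _ iA jA le_ij; rewrite -eij leqNgt gt_phi.
Qed.

Lemma ordered_core_endo_id (C G : graph) (phi : nat -> nat) :
  is_ordered_core C G -> op_hom C C phi -> {in gV C, phi =1 id}.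
Proof.
move=> [sCG [r hr] minC] hphi.
have [phiV phile _] := hphi.
have sIC : phi @` gV C `<=` gV C.
  by apply/fsubsetP => _ /imfsetP [i /= iV ->]; apply: phiV.
have /minC le_card : subgraph (induced C (phi @` gV C)) G.
  exact: subgraph_induced sIC.
have /le_card /= ge_card : op_homomorphic G (induced C (phi @` gV C)).
  by exists (phi \o r); apply: op_hom_comp hr (op_hom_onto_image hphi).
apply: nondecreasing_injective_fset_id => //.
by apply/card_in_imfsetP; rewrite eqn_leq ge_card fsubset_leq_card.
Qed.

Lemma op_iso_le (C K : graph) (g : nat -> nat) i j :
  op_iso C K g -> i \in gV C -> j \in gV C -> (g i <= g j) = (i <= j).
Proof.
move=> [[_ gle _] ginj _ _] iV jV; apply/idP/idP => [gij | /gle -> //].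
rewrite leqNgt; apply/negP => lt_ji.
have /ginj eqg : g j = g i by apply/eqP; rewrite eqn_leq gij gle // ltnW.
by rewrite eqg // ltnn in lt_ji.
Qed.

Lemma op_iso_inverse (C K : graph) (g : nat -> nat) :
  op_iso C K g ->
  exists2 h, op_hom K C h & forall k, k \in gV K -> g (h k) = k.
Proof.
move=> isog; have [_ _ gsurj grefl] := isog.
pose h k := nth 0 (gV C) (find (fun i => g i == k) (gV C)).
have hK k : k \in gV K -> h k \in gV C /\ g (h k) = k.
  move=> /gsurj [i iV gik].
  have has_k : has (fun i => g i == k) (gV C) by apply/hasP; exists i; rewrite ?gik.
  by split; [rewrite mem_nth // -has_find | apply/eqP; exact: (nth_find 0 has_k)].
exists h => [|k /hK [] //]; split => [k /hK [] // | k l kV lV kl | k l kV lV e].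
- have [hkV ghk] := hK k kV; have [hlV ghl] := hK l lV.
  by rewrite -(op_iso_le isog hkV hlV) ghk ghl.
- have [hkV ghk] := hK k kV; have [hlV ghl] := hK l lV.
  by apply: grefl; rewrite ?ghk ?ghl.
Qed.

Lemma ordered_core_op_hom_rigid (C G K : graph) (g f : nat -> nat) :
  is_ordered_core C G -> op_iso C K g -> op_hom C K f -> {in gV C, f =1 g}.
Proof.
move=> coreC isog hf; have [h hK gh] := op_iso_inverse isog.
have hfid := ordered_core_endo_id coreC (op_hom_comp hf hK).
have [fV _ _] := hf.
by move=> i iV; rewrite -{2}(hfid i iV) /= gh ?fV.
Qed.

Lemma ordered_core_exists (G : graph) :
  subgraph G G -> exists C, is_ordered_core C G.
Proof.
suff core_below n : forall S, #|` gV S| = n ->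
    subgraph S G -> op_homomorphic G S -> exists C, is_ordered_core C G.
  by move=> sGG; apply: (core_below _ G) => //; exists id.
elim/ltn_ind: n => n IH S cardS sSG hGS.
case: (classic (exists2 S', subgraph S' G /\ op_homomorphic G S' &
                            #|` gV S'| < #|` gV S|)) => [[S' [sS'G hGS'] lt_S'] | noS'].
  by apply: (IH #|` gV S'| _ S') => //; rewrite -cardS.
exists S; split => // S' sS'G hGS'; rewrite leqNgt; apply/negP => lt_S'.
by apply: noS'; exists S'.
Qed.

Section Backedge.

Variables (T : finType) (a : rel T) (lab : T -> nat).
Hypothesis lab_labeling : labeling lab.

Lemma mem_backedge i : (i \in gV (backedge a lab)) = (0 < i <= #|T|).
Proof. by rewrite inE mem_iota add1n ltnS. Qed.

Lemma labeling_mem_backedge x : lab x \in gV (backedge a lab).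
Proof. by rewrite mem_backedge; apply: lab_labeling.2. Qed.

Lemma labeling_onto i : i \in gV (backedge a lab) -> exists x, lab x = i.
Proof.
have [labinj labrange] := lab_labeling.
have sub_labs : {subset map lab (enum T) <= iota 1 #|T|}.
  by move=> _ /mapP [x _ ->]; rewrite mem_iota add1n ltnS labrange.
have size_labs : size (iota 1 #|T|) <= size (map lab (enum T)).
  by rewrite size_iota size_map -cardE.
have uniq_labs : uniq (map lab (enum T)) by rewrite map_inj_uniq ?enum_uniq.
have [_ labsE] := uniq_min_size uniq_labs sub_labs size_labs.
by rewrite inE -labsE => /mapP [x _ ->]; exists x.
Qed.

Lemma backedge_subgraph_refl : subgraph (backedge a lab) (backedge a lab).
Proof.
split => // i j.
  move=> e; split => //; case/existsP: e => x /existsP [y /andP [/andP [/eqP <- /eqP <-] _]];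
  exact: labeling_mem_backedge.
by apply/existsP/existsP => [] [x /existsP [y /andP [/andP [lx ly] e]]];
   exists y; apply/existsP; exists x; rewrite lx ly orbC.
Qed.

End Backedge.

Theorem proposition4p6 (T : finType) (a : rel T) (lab : T -> nat) (K : graph)
  (f : nat -> nat) :
  oriented a -> labeling lab -> maximal_core a K ->
  op_hom (backedge a lab) K f ->
  exists X : {set T},
    [/\ {in X &, injective (fun x => f (lab x))},
        (forall k, k \in gV K -> exists2 x, x \in X & f (lab x) = k) &
        (forall x y, x \in X -> y \in X ->
           gE (backedge a lab) (lab x) (lab y) = gE K (f (lab x)) (f (lab y)))].
Proof.
move=> _ hlab [_ maxK] hf.
have [C coreC] := ordered_core_exists (backedge_subgraph_refl a hlab).
have [subCG _ _] := coreC; have [/fsubsetP sCG edgeCG _] := subCG.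
have fC := op_hom_subgraph subCG hf.
have [g isog] := maxK C (ex_intro _ lab (conj hlab coreC)) (ex_intro _ f fC).
have fg := ordered_core_op_hom_rigid coreC isog fC.
have [_ _ fE] := hf; have [_ ginj gsurj grefl] := isog.
exists [set x | lab x \in gV C]; split.
- move=> x y; rewrite !inE => xV yV /=; rewrite !fg // => /ginj eqxy.
  exact/hlab.1/eqxy.
- move=> _ /gsurj [i iV <-].
  have [x labx] := labeling_onto hlab (sCG i iV).
  by exists x; rewrite ?inE labx ?fg.
- move=> x y; rewrite !inE => xV yV; apply/idP/idP => [| e].
    by apply: fE; apply: labeling_mem_backedge.
  have eg : gE K (g (lab x)) (g (lab y)) by rewrite -!fg.
  by have [_ _] := edgeCG _ _ (grefl _ _ xV yV eg).
Qed.
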